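(* Let $k\in\omega\setminus\{0\}$, let $f_{i_1},\dots,f_{i_n}\in\{f_1,\dots,f_{m(k)}\}$ ($n\ge0$), and let $T=T_k^*(f_{i_1},0)\cdots(f_{i_n},0)$. If $T\ne\Lambda$, then $r(T)\ge\max(1,k-n)$.
   Context: Notation: $\omega=\{0,1,2,\dots\}$; $\mathcal P(\omega)$ is the set of nonempty finite subsets of $\omega$; $E_2=\{0,1\}$. $P=\{f_i:i\in\omega\}$ is a set of attributes. Decision tables: $\mathcal M_2^\infty$ is the set of rectangular tables filled with numbers from $E_2$, whose columns are labeled with pairwise different attributes from $P$, whose rows are pairwise different, and each row of which is labeled with a set from $\mathcal P(\omega)$ (its set of decisions). The empty table is denoted $\Lambda$. For nonempty $T$ and a word $\alpha=(f_{i_1},\delta_1)\cdots(f_{i_m},\delta_m)$ with $f_{i_j}$ column attributes of $T$ and $\delta_j\in E_2$, $T\alpha$ is the subtable consisting of the rows having value $\delta_j$ in column $f_{i_j}$ for all $j$; $T\lambda=T$ for the empty word; $\Lambda\alpha=\Lambda$. The graph $G_k$ and tables $T_k$, $T_k^*$ ($k\ge1$): $G_k$ is a directed graph whose nodes are arranged in $k$ layers, layer $s$ ($1\le s\le k$) containing $s$ nodes; the nodes are numbered $1,\dots,m(k)$, $m(k)=k(k+1)/2$, layer by layer from the top and from left to right within a layer (so the $j$th node of layer $s$ has number $s(s-1)/2+j$). For a node $i$ that is the $j$th node of layer $s<k$, its left child $l(i)$ is the $j$th node of layer $s+1$ and its right child $p(i)$ is the $(j+1)$th node of layer $s+1$;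 the edges of $G_k$ go from each node to its two children. Define $\nu_k:E_2^{m(k)}\to\mathcal P(\omega)$: for $\bar\delta=(\delta_1,\dots,\delta_{m(k)})$, $\nu_k(\bar\delta)\subseteq\{0,1,\dots,m(k)\}$, where $0\in\nu_k(\bar\delta)$ iff $\delta_1=0$; for a node $i$ not in layer $k$, $i\in\nu_k(\bar\delta)$ iff $\delta_i=1$ and $\delta_{l(i)}=\delta_{p(i)}=0$; for a node $i$ in layer $k$, $i\in\nu_k(\bar\delta)$ iff $\delta_i=1$. $T_k\in\mathcal M_2^\infty$ is the table with $m(k)$ columns labeled $f_1,\dots,f_{m(k)}$ (column $f_i$ corresponding to node $i$), whose rows are all $2^{m(k)}$ tuples of $E_2^{m(k)}$, each row $\bar\delta$ labeled with $\nu_k(\bar\delta)$. A complete path in $G_k$ is a directed path from node $1$ to a node of layer $k$; its characteristic tuple is $(\delta_1,\dots,\delta_{m(k)})\in E_2^{m(k)}$ with $\delta_i=1$ iff the path passes through node $i$. $T_k^*$ is the subtable of $T_k$ consisting of exactly the rows that are characteristic tuples of complete paths in $G_k$. For a subtable $T$ of $T_k^*$ with rows $\bar\delta_1,\dots,\bar\delta_t$, $r(T)=|\{\nu_k(\bar\delta_1),\dots,\nu_k(\bar\delta_t)\}|$ (the number of distinct decision sets among its rows). *)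

From mathcomp Require Import all_boot.
Set Implicit Arguments. Unset Strict Implicit. Unset Printing Implicit Defensive.

(* m(k) = k(k+1)/2 : number of nodes of G_k *)
Definition m (k : nat) : nat := (k * k.+1) %/ 2.

(* Number of the (j+1)-th node of layer (s+1), with 0-based s, j:
   (s+1)s/2 + (j+1).  Its left child is num s j + (s+1), its right child
   num s j + (s+2). *)
Definition num (s j : nat) : nat := (s * s.+1) %/ 2 + j + 1.

(* A directed path in G_k from node 1 to layer k visits exactly one node per
   layer; we encode it by p : layer (0-based) -> position in that layer
   (0-based).  It starts at node 1 (p 0 = 0) and each step goes to the left
   child (same position) or right child (position + 1). *)
Definition is_cpath (k : nat) (p : {ffun 'I_k -> 'I_k}) : bool :=
  [forall s : 'I_k, (val s == 0) ==> (val (p s) == 0)] &&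
  [forall s : 'I_k, forall t : 'I_k,
      (val t == (val s).+1) ==>
      ((val (p t) == val (p s)) || (val (p t) == (val (p s)).+1))].

(* Characteristic tuple of a path: delta_i = 1 iff the path passes node i
   (only indices 1..m(k) are meaningful). *)
Definition chi (k : nat) (p : {ffun 'I_k -> 'I_k}) : nat -> bool :=
  fun i => [exists s : 'I_k, num s (p s) == i].

Definition nu (k : nat) (d : nat -> bool) : {set 'I_(m k).+1} :=
  [set i : 'I_(m k).+1 |
     ((val i == 0) && ~~ d 1) ||
     [exists s : 'I_k, exists j : 'I_k,
        [&& val j <= val s, val i == num s j &
            (if (val s).+1 < k
             then [&& d (val i), ~~ d (val i + (val s).+1)
                                 & ~~ d (val i + (val s).+2)]
             else d (val i))]]].

(* Rows of T = T_k^* (f_{a_1},0)...(f_{a_n},0): characteristic tuples of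
   complete paths having value 0 at every attribute index in a. *)
Definition rowsT (k : nat) (a : seq nat) : {set {ffun 'I_k -> 'I_k}} :=
  [set p : {ffun 'I_k -> 'I_k} | is_cpath p && all (fun i => ~~ chi p i) a].

Definition r (k : nat) (a : seq nat) : nat :=
  #|[set nu k (chi p) | p in rowsT k a]|.

From mathcomp Require Import all_boot zify.
Set Implicit Arguments. Unset Strict Implicit.

(* A complete path of G_k marks exactly the nodes it visits, and each visited
   node outside layer k has a marked child, so the decision set of a row is
   the singleton of the path's endpoint: r(T) counts the endpoints of complete
   paths avoiding the forbidden nodes a.  Let R_n be the set of positions of
   layer n reached by paths avoiding a up to layer n.  If R_n is nonempty,
   its children form at least |R_n| + 1 positions (the right child of its
   maximum is new), and every child that is not forbidden lies in R_(n+1).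
   Hence |R_n| plus the number of forbidden nodes in layers 1..n is at least
   n + 1, which at the last layer gives r(T) >= k - |a|; and r(T) >= 1 since
   T is nonempty. *)

Lemma triangularS s : (s.+1 * s.+2) %/ 2 = (s * s.+1) %/ 2 + s.+1.
Proof.
have -> : s.+1 * s.+2 = s.+1 * 2 + s * s.+1 by nia.
by rewrite divnMDl // addnC.
Qed.

Lemma leq_triangular s s' : s <= s' -> (s * s.+1) %/ 2 <= (s' * s'.+1) %/ 2.
Proof. by move=> le_ss'; apply/leq_div2r/leq_mul. Qed.

Lemma numS s j : num s.+1 j = num s j + s.+1.
Proof. rewrite /num triangularS; lia. Qed.

Lemma num_ltn_layer s j s' j' : j <= s -> s < s' -> num s j < num s' j'.
Proof. by move=> le_js /leq_triangular; rewrite /num triangularS; lia. Qed.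

Lemma num_inj s j s' j' :
  j <= s -> j' <= s' -> num s j = num s' j' -> s = s' /\ j = j'.
Proof.
move=> le_js le_js' eq_num.
case: (ltngtP s s') => [lt_ss'|lt_s's|eq_ss'].
- by have := num_ltn_layer j' le_js lt_ss'; lia.
- by have := num_ltn_layer j le_js' lt_s's; lia.
- by subst s'; move: eq_num; rewrite /num; lia.
Qed.

Lemma num_leq_m k j : j <= k -> num k j <= m k.+1.
Proof. rewrite /m /num triangularS; lia. Qed.

Section CompletePaths.
Variable k : nat.
Implicit Types (p : {ffun 'I_k -> 'I_k}) (s t : 'I_k).

Lemma cpath_start p s : is_cpath p -> val s = 0 -> val (p s) = 0.
Proof.
by case/andP=> /forallP/(_ s) + _ s0; rewrite s0 eqxx => /eqP.
Qed.

Lemma cpath_step p s t : is_cpath p -> val t = (val s).+1 ->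
  val (p t) = val (p s) \/ val (p t) = (val (p s)).+1.
Proof.
case/andP=> _ /forallP/(_ s)/forallP/(_ t) + ts.
by rewrite ts eqxx => /orP[] /eqP; [left | right].
Qed.

Lemma cpath_leq p t : is_cpath p -> val (p t) <= val t.
Proof.
move=> cp; move Hn: (val t) => n; elim: n t Hn => [|n IHn] t tn.
  by rewrite (cpath_start cp tn).
have ltnk : n < k by rewrite -ltnS -tn; exact: ltnW (ltn_ord t).
have := IHn (Ordinal ltnk) erefl.
by case: (cpath_step (s := Ordinal ltnk) cp tn) => ->; lia.
Qed.

Lemma chi_num p t : chi p (num t (p t)).
Proof. by apply/existsP; exists t. Qed.

Lemma chi_numE p s j : is_cpath p -> j <= val s -> chi p (num s j) = (val (p s) == j).
Proof.
move=> cp le_js; apply/idP/eqP => [/existsP[t /eqP eq_num] | <-]; last exact: chi_num.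
have [eq_ts <-] := num_inj (cpath_leq t cp) le_js eq_num.
by rewrite (val_inj eq_ts).
Qed.

End CompletePaths.

Lemma nu_cpath k (p : {ffun 'I_k.+1 -> 'I_k.+1}) : is_cpath p ->
  nu k.+1 (chi p) = [set inord (num k (p ord_max))].
Proof.
move=> cp; have end_lt : num k (p ord_max) < (m k.+1).+1.
  by rewrite ltnS num_leq_m // -ltnS.
apply/setP => i; rewrite in_set1 inE; apply/idP/idP => [|/eqP->]; last first.
  apply/orP; right; apply/existsP; exists ord_max; apply/existsP; exists (p ord_max).
  by rewrite /= inordK // -ltnS ltn_ord eqxx ltnn chi_num.
case/orP => [/andP[_] | /existsP[s /existsP[j /and3P[le_js /eqP ei]]]].
  by have := chi_num p ord0; rewrite (cpath_start cp (s := ord0)) // => ->.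
rewrite ei; case: ifP => [lt_sk | ge_sk].
  pose t := Ordinal lt_sk.
  have -> : num s j + (val s).+1 = num t j by rewrite /= numS.
  have -> : num s j + (val s).+2 = num t j.+1 by rewrite /= !numS /num; lia.
  have le_jt : j <= val t := leqW le_js.
  rewrite (chi_numE cp le_js) (chi_numE cp le_jt) (chi_numE (s := t) (j := j.+1) cp le_js).
  case/and3P=> /eqP ps.
  by case: (cpath_step (t := t) cp erefl) => ->; rewrite ps eqxx.
rewrite chi_numE // => /eqP ps.
have s_max : s = ord_max.
  by apply/val_inj/eqP; rewrite /= eqn_leq -ltnS ltn_ord leqNgt -ltnS ge_sk.
by apply/eqP/val_inj; rewrite /= inordK // ei -ps s_max.
Qed.

Section Reachable.
Variables (k : nat) (a : seq nat).
Implicit Types (p : {ffun 'I_k -> 'I_k}) (s t : 'I_k).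

Definition avoids p n := [forall t : 'I_k, (val t <= n) ==> (num t (p t) \notin a)].

Definition reach n : {set 'I_k} :=
  [set j | [exists p, [&& is_cpath p, avoids p n &
                         [exists s : 'I_k, (val s == n) && (p s == j)]]]].

Definition blocked l : {set 'I_k} := [set j : 'I_k | (val j <= l) && (num l j \in a)].

Definition blocked_upto n : {set 'I_k * 'I_k} :=
  [set x : 'I_k * 'I_k | [&& 0 < val x.1 <= n, val x.2 <= val x.1 & num x.1 x.2 \in a]].

Definition extend p n (j : 'I_k) : {ffun 'I_k -> 'I_k} :=
  [ffun t => if val t <= n then p t else j].

Lemma reach_leq n j : j \in reach n -> val j <= n.
Proof.
rewrite inE => /existsP[p /and3P[cp _ /existsP[s /andP[/eqP <- /eqP <-]]]].
exact: cpath_leq.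
Qed.

Lemma reach_neq0_leq n n' : n < k -> n <= n' -> reach n' != set0 -> reach n != set0.
Proof.
move=> lt_nk le_nn' /set0Pn[j]; rewrite inE => /existsP[p /and3P[cp avp _]].
apply/set0Pn; exists (p (Ordinal lt_nk)); rewrite inE; apply/existsP; exists p.
rewrite cp /=; apply/andP; split.
  apply/forallP => t; apply/implyP => le_tn.
  by move/forallP/(_ t)/implyP: avp; apply; apply: leq_trans le_nn'.
by apply/existsP; exists (Ordinal lt_nk); rewrite !eqxx.
Qed.

Lemma cpath_extend p s j : is_cpath p ->
  val j = val (p s) \/ val j = (val (p s)).+1 -> is_cpath (extend p (val s) j).
Proof.
move=> cp jchild; apply/andP; split; apply/forallP => t.
  by apply/implyP => /eqP t0; rewrite ffunE t0 leq0n; apply/eqP; apply: cpath_start.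
apply/forallP => t'; apply/implyP => /eqP t't; rewrite !ffunE t't.
case: (leqP (val t).+1 (val s)) => [lt_ts | le_st].
  by rewrite (ltnW lt_ts); case: (cpath_step cp t't) => ->; rewrite eqxx ?orbT.
case: (leqP (val t) (val s)) => [le_ts | _]; last by rewrite eqxx.
have -> : t = s by apply/val_inj/eqP; rewrite eqn_leq le_ts -ltnS.
by case: jchild => ->; rewrite eqxx ?orbT.
Qed.

Lemma reach_children n i j : n.+1 < k -> i \in reach n ->
  val j = val i \/ val j = (val i).+1 -> j \in reach n.+1 :|: blocked n.+1.
Proof.
move=> lt_nk ireach jchild; rewrite inE.
case: (boolP (num n.+1 j \in a)) => [j_blocked | j_free].
  apply/orP; right; rewrite inE j_blocked andbT.
  by have := reach_leq ireach; case: jchild => ->; lia.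
apply/orP; left; move: ireach.
rewrite inE => /existsP[p /and3P[cp avp /existsP[s /andP[/eqP sn /eqP ps]]]].
rewrite -ps in jchild; have := cpath_extend cp jchild; rewrite sn => cpe.
rewrite inE; apply/existsP; exists (extend p n j); rewrite cpe /=; apply/andP; split.
  apply/forallP => t; apply/implyP => le_tn; rewrite ffunE.
  case: leqP => [le_tn' | lt_nt]; first by move/forallP/(_ t)/implyP: avp; apply.
  by have -> : val t = n.+1 by apply/eqP; rewrite eqn_leq le_tn.
by apply/existsP; exists (Ordinal lt_nk); rewrite ffunE /= ltnn !eqxx.
Qed.

(* The right child of the rightmost reachable position is new. *)
Lemma card_reach_succ n : n.+1 < k -> reach n != set0 ->
  #|reach n| < #|reach n.+1| + #|blocked n.+1|.
Proof.
move=> lt_nk /set0Pn[i0 i0reach].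
pose M := [arg max_(i > i0 in reach n) val i].
have [Mreach Mmax] : M \in reach n /\ forall i, i \in reach n -> val i <= val M.
  by rewrite /M; case: arg_maxnP => // x xreach xmax; split => // i /xmax.
have lt_Mk : (val M).+1 < k by apply: leq_ltn_trans lt_nk; rewrite ltnS reach_leq.
pose J := Ordinal lt_Mk.
have Jnew : J \notin reach n by apply/negP => /Mmax; rewrite ltnn.
have sub : J |: reach n \subset reach n.+1 :|: blocked n.+1.
  apply/subsetP => j; rewrite in_setU1 => /orP[/eqP -> | jreach].
    by apply: (reach_children (i := M)) => //; right.
  by apply: (reach_children (i := j)) => //; left.
have := subset_leq_card sub; rewrite cardsU1 Jnew cardsU => /leq_trans; apply.
exact: leq_subr.
Qed.

Lemma card_blocked_upto_succ n : n.+1 < k ->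
  #|blocked_upto n| + #|blocked n.+1| <= #|blocked_upto n.+1|.
Proof.
move=> lt_nk; pose layer := [set (Ordinal lt_nk, j) | j in blocked n.+1].
have card_layer : #|layer| = #|blocked n.+1| by apply: card_imset => x y [].
have disj : blocked_upto n :&: layer = set0.
  apply/setP => x; rewrite !inE; apply/negP => /andP[xlow /imsetP[j _ xj]].
  by move: xlow; rewrite xj /= ltnn.
have sub : blocked_upto n :|: layer \subset blocked_upto n.+1.
  apply/subsetP => x; rewrite !inE.
  case/orP => [/and3P[/andP[x1_gt0 x1_le] x2_le xa] | /imsetP[j jb ->]].
    by rewrite x1_gt0 x2_le xa (leq_trans x1_le (leqnSn n)).
  by move: jb; rewrite inE /= ltnSn.
by rewrite -card_layer -(cardsUI _ layer) disj cards0 addn0 subset_leq_card.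
Qed.

Lemma card_blocked_upto n : #|blocked_upto n| <= size a.
Proof.
pose node (x : 'I_k * 'I_k) := num x.1 x.2.
rewrite cardE -(size_map node); apply: uniq_leq_size.
  rewrite map_inj_in_uniq ?enum_uniq // => -[x1 x2] [y1 y2].
  rewrite !mem_enum !inE => /and3P[_ x2_le _] /and3P[_ y2_le _] eq_node.
  by case: (num_inj x2_le y2_le eq_node) => /val_inj /= -> /val_inj /= ->.
by move=> i /mapP[x]; rewrite mem_enum inE => /and3P[_ _ xa] ->.
Qed.

Lemma card_reach_blocked_upto n : n < k -> reach n != set0 ->
  n.+1 <= #|reach n| + #|blocked_upto n|.
Proof.
elim: n => [|n IHn] lt_nk reach_n.
  by move: reach_n; rewrite -card_gt0 addn_gt0 => ->.
have reach_pred := reach_neq0_leq (ltnW lt_nk) (leqnSn n) reach_n.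
have := IHn (ltnW lt_nk) reach_pred; have := card_reach_succ lt_nk reach_pred.
have := card_blocked_upto_succ lt_nk; lia.
Qed.

End Reachable.

Lemma rowsT_avoids k a (p : {ffun 'I_k.+1 -> 'I_k.+1}) :
  (p \in rowsT k.+1 a) = is_cpath p && avoids a p k.
Proof.
rewrite inE; congr (_ && _); apply/allP/forallP => [a_free t | avoid_all i ia].
  by apply/implyP => _; apply/negP => /a_free; rewrite chi_num.
apply/negP => /existsP[t /eqP ti]; move/(_ t)/implyP: avoid_all.
by rewrite ti ia => /(_ (ltn_ord t)).
Qed.

Lemma reach_last k a :
  reach k.+1 a k = [set p ord_max | p : {ffun 'I_k.+1 -> 'I_k.+1} in rowsT k.+1 a].
Proof.
apply/setP => j; apply/idP/imsetP => [|[p]].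
  rewrite inE => /existsP[p /and3P[cp avp /existsP[s /andP[/eqP sk /eqP <-]]]].
  by exists p; [rewrite rowsT_avoids cp | congr (p _); apply: val_inj].
rewrite rowsT_avoids => /andP[cp avp] ->; rewrite inE; apply/existsP; exists p.
by rewrite cp avp; apply/existsP; exists ord_max; rewrite !eqxx.
Qed.

Lemma r_card_reach k a : r k.+1 a = #|reach k.+1 a k|.
Proof.
have end_lt (j : 'I_k.+1) : num k j < (m k.+1).+1 by rewrite ltnS num_leq_m // -ltnS.
pose decision (j : 'I_k.+1) : {set 'I_(m k.+1).+1} := [set inord (num k j)].
pose endpoint (p : {ffun 'I_k.+1 -> 'I_k.+1}) := p ord_max.
rewrite /r (@eq_in_imset _ _ _ (decision \o endpoint)); last first.
  by move=> p; rewrite rowsT_avoids => /andP[cp _]; apply: nu_cpath.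
rewrite imset_comp -reach_last; apply: card_in_imset => i j _ _.
move=> /set1_inj/(congr1 val); rewrite /= !inordK //.
by move=> /(@num_inj k i k j (ltn_ord i) (ltn_ord j))[_ /val_inj].
Qed.

Theorem lemma8 (k : nat) (a : seq nat) :
  0 < k ->
  all (fun i => 0 < i <= m k) a ->
  rowsT k a != set0 ->
  maxn 1 (k - size a) <= r k a.
Proof.
case: k => [//|k] _ _ /set0Pn[p prow].
have reach_k : reach k.+1 a k != set0.
  by apply/set0Pn; exists (p ord_max); rewrite reach_last; apply: imset_f.
have := card_reach_blocked_upto (leqnn k.+1) reach_k.
have := card_blocked_upto k.+1 a k.
by move: reach_k; rewrite -card_gt0 r_card_reach geq_max; lia.
Qed.
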